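(* Let $\mathcal{I}=\langle N,T,\{O_t\}_{t\in[T]},\mathbf{v}\rangle$ be an informed online fair division instance with $T$ rounds and $m$ items in total, in which several items may arrive in the same round. Label the items $o_1,\dots,o_m$ so that whenever $o_j\in O_r$, $o_{j'}\in O_{r'}$ and $r<r'$, we have $j<j'$ (items within a round are ordered arbitrarily), and let $\mathcal{I}^{=1}=\langle N,m,\{\widetilde O_t\}_{t\in[m]},\mathbf{v}\rangle$ be the instance with the same agents and valuations, $m$ rounds, and $\widetilde O_t=\{o_t\}$ for every $t\in[m]$. If a TEF1 allocation exists for $\mathcal{I}^{=1}$, then a TEF1 allocation exists for $\mathcal{I}$.
   Context: An instance $\langle N,T,\{O_t\}_{t\in[T]},\mathbf{v}\rangle$ consists of agents $N=[n]$, and pairwise disjoint sets $O_1,\dots,O_T$ of indivisible items, where $O_t$ is the set of items arriving in round $t$; $O^t=\bigcup_{\ell\le t}O_\ell$ and $O=O^T$. Each agent $i$ has an additive valuation $v_i:2^O\to\mathbb{R}$, $v_i(S)=\sum_{o\in S}v_i(o)$. Either all items are goods ($v_i(o)\ge 0$ for all $i,o$) or all are chores ($v_i(o)\le0$ for all $i,o$). An allocation $\mathcal{A}=(A_1,\dots,A_n)$ is an ordered partition of $O$; for $t\in[T]$, $\mathcal{A}^t=(A_1\cap O^t,\dots,A_n\cap O^t)$. An allocation $(B_1,\dots,B_n)$ is EF1 if for all $i,j\in N$ there is a good $g\in B_j$ with $v_i(B_i)\ge v_i(B_j\setminus\{g\})$ (goods case), resp. a chore $c\in B_i$ with $v_i(B_i\setminus\{c\})\ge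 v_i(B_j)$ (chores case); this holds vacuously-as-true when the relevant bundle is empty and there is no envy (i.e. if $v_i(B_i)\ge v_i(B_j)$). An allocation $\mathcal{A}$ is TEF1 (temporal EF1) if $\mathcal{A}^t$ is EF1 for every $t\in[T]$. *)

From mathcomp Require Import all_boot all_order all_algebra.
Set Implicit Arguments. Unset Strict Implicit. Unset Printing Implicit Defensive.
Import Order.TTheory GRing.Theory Num.Theory.
Local Open Scope ring_scope.

(* Agents are 'I_n, items are 'I_m (item o_{j+1} is the ordinal j),
   rounds are 'I_T (round t+1 is the ordinal t).  An instance is given by
   a round assignment [round : 'I_m -> 'I_T] (O_t = items with round t)
   and valuations [v : 'I_n -> 'I_m -> R] (additive). *)

Inductive item_kind := Goods | Chores.

Definition valid_kind {R : numDomainType} {n m : nat}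
  (k : item_kind) (v : 'I_n -> 'I_m -> R) : Prop :=
  match k with
  | Goods => forall i o, 0 <= v i o
  | Chores => forall i o, v i o <= 0
  end.

Definition bval {R : numDomainType} {n m : nat}
  (v : 'I_n -> 'I_m -> R) (i : 'I_n) (B : {set 'I_m}) : R :=
  \sum_(o in B) v i o.

Definition bundle {n m : nat} (A : 'I_m -> 'I_n) (S : {set 'I_m}) (k : 'I_n)
  : {set 'I_m} := [set o in S | A o == k].

Definition EF1 {R : numDomainType} {n m : nat} (k : item_kind)
  (v : 'I_n -> 'I_m -> R) (B : 'I_n -> {set 'I_m}) : Prop :=
  forall i j : 'I_n,
  match k with
  | Goods =>
      bval v i (B j) <= bval v i (B i) \/
      exists2 g, g \in B j & bval v i (B j :\ g) <= bval v i (B i)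
  | Chores =>
      bval v i (B j) <= bval v i (B i) \/
      exists2 c, c \in B i & bval v i (B j) <= bval v i (B i :\ c)
  end.

Definition prefix_items {m T : nat} (round : 'I_m -> 'I_T) (t : 'I_T)
  : {set 'I_m} := [set o | (round o <= t)%N].

Definition TEF1 {R : numDomainType} {n m T : nat} (k : item_kind)
  (v : 'I_n -> 'I_m -> R) (round : 'I_m -> 'I_T) (A : 'I_m -> 'I_n) : Prop :=
  forall t : 'I_T, EF1 k v (bundle A (prefix_items round t)).

From mathcomp Require Import all_boot all_order all_algebra.
Local Open Scope ring_scope.
Set Implicit Arguments. Unset Strict Implicit.

(* Since the labelling is compatible with the rounds, every nonempty prefix
   O^t of the batched instance consists exactly of the items up to its
   largest one, i.e. it is a prefix of the one-item-per-round instance; the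
   empty prefix is trivially EF1.  Hence any TEF1 allocation of the latter
   is TEF1 for the former, whatever the signs of the valuations. *)

Lemma EF1_bundle_set0 (R : numDomainType) (n m : nat) (k : item_kind)
    (v : 'I_n -> 'I_m -> R) (A : 'I_m -> 'I_n) :
  EF1 k v (bundle A set0).
Proof.
have bundle0 i : bundle A set0 i = set0 by apply/setP => o; rewrite !inE.
by move=> i j; case: k; left; rewrite !bundle0.
Qed.

Section BatchedPrefixes.

Variables m T : nat.
Variable round : 'I_m -> 'I_T.
Hypothesis round_mono : forall j j' : 'I_m, (round j < round j')%N -> (j < j')%N.

Lemma prefix_items_max (t : 'I_T) (j : 'I_m) :
  j \in prefix_items round t ->
  (forall o, o \in prefix_items round t -> (o <= j)%N) ->
  prefix_items round t = prefix_items (fun o : 'I_m => o) j.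
Proof.
move=> Sj Smax; apply/setP => o; rewrite [in RHS]inE.
apply/idP/idP => [|le_oj]; first exact: Smax.
move: Sj; rewrite !inE => le_jt.
case: (leqP (round o) (round j)) => [le_round|lt_round].
  exact: leq_trans le_round le_jt.
by have := round_mono lt_round; rewrite ltnNge le_oj.
Qed.

Lemma prefix_items_set0_or_ord_prefix (t : 'I_T) :
  prefix_items round t = set0 \/
  exists j : 'I_m, prefix_items round t = prefix_items (fun o : 'I_m => o) j.
Proof.
have [S0|[o0 So0]] := set_0Vmem (prefix_items round t); first by left.
right; case: (@arg_maxnP _ o0 (mem (prefix_items round t)) val So0) => j Sj Smax.
by exists j; apply: prefix_items_max.
Qed.

End BatchedPrefixes.

Theorem lemma1 (R : realDomainType) (n m T : nat) (k : item_kind)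
  (round : 'I_m -> 'I_T) (v : 'I_n -> 'I_m -> R) :
  valid_kind k v ->
  (forall j j' : 'I_m, (round j < round j')%N -> (j < j')%N) ->
  (exists A : 'I_m -> 'I_n, TEF1 k v (fun o : 'I_m => o) A) ->
  exists A : 'I_m -> 'I_n, TEF1 k v round A.
Proof.
move=> _ round_mono [A A_TEF1]; exists A => t.
have [->|[j ->]] := prefix_items_set0_or_ord_prefix round_mono t.
- exact: EF1_bundle_set0.
- exact: A_TEF1.
Qed.
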